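(* Let $n\ge0$. For every $m\ge0$, in $OPol_{n+1}$: (1) $x_{n+1}^{m+n+1}=-\sum_{q=0}^n\Big(\sum_{r=0}^m(-1)^{m+n+1-q-r}h_r^{(n+1)}e^{(n+1)}_{m+n+1-q-r}\Big)x_{n+1}^q$; (2) $x_1^{m+n+1}=-\sum_{p=0}^nx_1^p\Big(\sum_{s=0}^m(-1)^{m+n+1-p-s}e^{(n+1)}_{m+n+1-p-s}h^{(n+1)}_s\Big)$.
   Context: $\Bbbk$ is a field of characteristic $\neq2$. $OPol_N$ is the graded superalgebra generated by odd degree-2 elements $x_1,\dots,x_N$ with $x_jx_i=-x_ix_j$ ($i\ne j$). $e_r^{(N)}:=\sum_{1\le i_1<\cdots<i_r\le N}x_{i_1}\cdots x_{i_r}$ (zero for $r>N$) and $h_r^{(N)}:=\sum_{N\ge i_r\ge\cdots\ge i_1\ge1}x_{i_r}\cdots x_{i_1}$, with $e^{(N)}_0=h^{(N)}_0=1$. *)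

From HB Require Import structures.
From mathcomp Require Import all_boot all_order all_algebra.
Set Implicit Arguments. Unset Strict Implicit. Unset Printing Implicit Defensive.
Import GRing.Theory.
Local Open Scope ring_scope.

(* Generators x_1,...,x_N are x : 'I_N -> A (0-based: x_i = x (i-1)). *)

Definition odd_anticomm (A : pzRingType) (N : nat) (x : 'I_N -> A) : Prop :=
  forall i j : 'I_N, i != j -> x j * x i = - (x i * x j).

Definition e_OP (A : pzRingType) (N : nat) (x : 'I_N -> A) (r : nat) : A :=
  \sum_(t : r.-tuple 'I_N | sorted (fun i j : 'I_N => (i < j)%N) t)
     \prod_(i <- t) x i.

(* h_r^{(N)} = sum_{N >= i_r >= ... >= i_1 >= 1} x_{i_r} ... x_{i_1}
   (the tuple t lists i_r, ..., i_1, weakly decreasing) *)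
Definition h_OP (A : pzRingType) (N : nat) (x : 'I_N -> A) (r : nat) : A :=
  \sum_(t : r.-tuple 'I_N | sorted (fun i j : 'I_N => (j <= i)%N) t)
     \prod_(i <- t) x i.

From HB Require Import structures.
From mathcomp Require Import all_boot all_order all_algebra.
From mathcomp Require Import zify.
Import GRing.Theory.
Set Implicit Arguments. Unset Strict Implicit. Unset Printing Implicit Defensive.
Local Open Scope ring_scope.

(* The ordered product
   (t - x_1) ... (t - x_N) = sum_s (-1)^s e_s t^(N-s), with t central and
   coefficients on the left, vanishes when x_N is substituted for t on the
   right, and when x_1 is substituted on the left (both by telescoping).  The
   generating series of the e_r and of the h_r are mutually inverse:
   sum_s (-1)^s h_(u-s) e_s = [u = 0] = sum_s (-1)^s e_s h_(u-s).  The first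
   vanishing expresses x_N^N through lower powers; reducing x_N^(m+N) one
   power at a time, the inverse-series identity identifies the remainder
   coefficients with the stated ones.  Statement (2) is the same reduction
   carried out in the opposite ring. *)

Lemma telescope_sum_ord (V : zmodType) n (f : nat -> V) :
  \sum_(i < n) (f i.+1 - f i) = f n - f 0%N.
Proof. by rewrite -(telescope_sumr f (leq0n n)) big_mkord. Qed.

Section IntervalSymmetricFunctions.
Variables (R : pzRingType) (X : nat -> R).

(* e_r and h_r of the variables X a, ..., X (b-1), in the orders of
   [e_OP] and [h_OP] (see [e_OP_itv] and [h_OP_itv]). *)
Fixpoint e_itv (a b r : nat) : R :=
  if r is r'.+1 then \sum_(a <= i < b) X i * e_itv i.+1 b r' else 1.

Fixpoint h_itv (a b r : nat) : R :=
  if r is r'.+1 then \sum_(a <= i < b) X i * h_itv a i.+1 r' else 1.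

Arguments e_itv : simpl never.
Arguments h_itv : simpl never.

Lemma e_itv0 a b : e_itv a b 0 = 1. Proof. by []. Qed.
Lemma h_itv0 a b : h_itv a b 0 = 1. Proof. by []. Qed.

Lemma e_itvS a b r :
  e_itv a b r.+1 = \sum_(a <= i < b) X i * e_itv i.+1 b r.
Proof. by []. Qed.

Lemma h_itvS a b r :
  h_itv a b r.+1 = \sum_(a <= i < b) X i * h_itv a i.+1 r.
Proof. by []. Qed.

Lemma e_itv_id a r : e_itv a a r = (r == 0)%:R.
Proof. by case: r => [|r] //; rewrite e_itvS big_geq. Qed.

Lemma h_itv_id a r : h_itv a a r = (r == 0)%:R.
Proof. by case: r => [|r] //; rewrite h_itvS big_geq. Qed.

Lemma e_itv_small a b r : (b - a < r)%N -> e_itv a b r = 0.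
Proof.
elim: r a => [//|r IHr] a ltr; rewrite e_itvS big_nat big1 // => i /andP[lai lib].
by rewrite IHr ?mulr0 //; lia.
Qed.

Lemma e_itvSl a b r : (a < b)%N ->
  e_itv a b r.+1 = X a * e_itv a.+1 b r + e_itv a.+1 b r.+1.
Proof. by move=> ltab; rewrite !e_itvS big_ltn. Qed.

Lemma e_itvSr a b r : (a <= b)%N ->
  e_itv a b.+1 r.+1 = e_itv a b r.+1 + e_itv a b r * X b.
Proof.
elim: r a => [|r IHr] a leab.
  by rewrite !e_itvS big_nat_recr //= mulr1 mul1r.
rewrite e_itvS big_nat_recr //= e_itv_id mulr0 addr0 !e_itvS mulr_suml -big_split /=.
by apply: eq_big_nat => i /andP[_ lib]; rewrite IHr // mulrDr mulrA.
Qed.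

Lemma h_itvSr a b r : (a <= b)%N ->
  h_itv a b.+1 r.+1 = X b * h_itv a b.+1 r + h_itv a b r.+1.
Proof. by move=> leab; rewrite !h_itvS big_nat_recr //= addrC. Qed.

Lemma h_itvSl a b r : (a < b)%N ->
  h_itv a b r.+1 = h_itv a b r * X a + h_itv a.+1 b r.+1.
Proof.
elim: r b => [|r IHr] b ltab.
  by rewrite !h_itvS big_ltn // mulr1 mul1r.
have -> : h_itv a b r.+2 =
    \sum_(a <= i < b) (X i * h_itv a i.+1 r * X a + X i * h_itv a.+1 i.+1 r.+1).
  by rewrite h_itvS; apply: eq_big_nat => i /andP[lai _]; rewrite IHr // mulrDr mulrA.
by rewrite big_split /= -mulr_suml -h_itvS big_ltn // h_itv_id mulr0 add0r -h_itvS.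
Qed.

Lemma h_e_cauchy_id a u :
  \sum_(s < u.+1) (-1) ^+ s * h_itv a a (u - s) * e_itv a a s = (u == 0)%:R.
Proof.
rewrite big_ord_recl big1 => [|s _]; last by rewrite e_itv_id mulr0.
by rewrite subn0 h_itv_id mulr1 mul1r addr0.
Qed.

Lemma e_h_cauchy_id a u :
  \sum_(s < u.+1) (-1) ^+ s * e_itv a a s * h_itv a a (u - s) = (u == 0)%:R.
Proof.
rewrite big_ord_recl big1 => [|s _]; last by rewrite e_itv_id mulr0 mul0r.
by rewrite subn0 h_itv_id e_itv0 !mul1r addr0.
Qed.

Section ExtendRight.
Variables a b : nat.
Hypothesis leab : (a <= b)%N.
Hypothesis cauchy_ab : forall u,
  \sum_(s < u.+1) (-1) ^+ s * h_itv a b (u - s) * e_itv a b s = (u == 0)%:R.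

Lemma h_e_cauchy_shift u :
  \sum_(s < u.+1) (-1) ^+ s * h_itv a b.+1 (u - s) * e_itv a b s = X b ^+ u.
Proof.
elim: u => [|u IHu]; first by rewrite big_ord1 h_itv0 e_itv0 !mulr1.
have := cauchy_ab u.+1; rewrite big_ord_recr /= subnn h_itv0 mulr1 => cauchy_u.
rewrite big_ord_recr /= subnn h_itv0 mulr1.
rewrite (eq_bigr (fun s : 'I_u.+1 =>
    X b * ((-1) ^+ s * h_itv a b.+1 (u - s) * e_itv a b s)
    + (-1) ^+ s * h_itv a b (u.+1 - s) * e_itv a b s)) => [|s _]; last first.
  rewrite (subSn (ltnSE (ltn_ord s))) h_itvSr // mulrDr mulrDl !mulrA.
  by rewrite (commr_sign (X b)).
by rewrite big_split /= -mulr_sumr IHu -addrA cauchy_u addr0 exprS.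
Qed.

Lemma h_e_cauchy_extend u :
  \sum_(s < u.+1) (-1) ^+ s * h_itv a b.+1 (u - s) * e_itv a b.+1 s = (u == 0)%:R.
Proof.
case: u => [|u]; first by rewrite big_ord1 h_itv0 e_itv0 !mulr1.
have := h_e_cauchy_shift u.+1; rewrite big_ord_recl.
under eq_bigr do rewrite lift0 subSS; rewrite /= e_itv0 => shift_u.
rewrite big_ord_recl (eq_bigr (fun s : 'I_u.+1 =>
    (-1) ^+ s.+1 * h_itv a b.+1 (u - s) * e_itv a b s.+1
    - (-1) ^+ s * h_itv a b.+1 (u - s) * e_itv a b s * X b)) => [|s _]; last first.
  by rewrite e_itvSr // mulrDr exprS mulN1r !mulNr mulrA.
rewrite big_split /= addrA e_itv0 shift_u sumrN -mulr_suml h_e_cauchy_shift.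
by rewrite exprSr subrr.
Qed.

End ExtendRight.

Lemma h_e_cauchy a b u : (a <= b)%N ->
  \sum_(s < u.+1) (-1) ^+ s * h_itv a b (u - s) * e_itv a b s = (u == 0)%:R.
Proof.
move=> /subnKC <-; elim: (b - a)%N u => [|k IHk] u.
  by rewrite addn0 h_e_cauchy_id.
by rewrite addnS h_e_cauchy_extend ?leq_addr.
Qed.

Section ExtendLeft.
Variables a b : nat.
Hypothesis ltab : (a < b)%N.
Hypothesis cauchy_ab : forall u,
  \sum_(s < u.+1) (-1) ^+ s * e_itv a.+1 b s * h_itv a.+1 b (u - s) = (u == 0)%:R.

Lemma e_h_cauchy_shift u :
  \sum_(s < u.+1) (-1) ^+ s * e_itv a.+1 b s * h_itv a b (u - s) = X a ^+ u.
Proof.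
elim: u => [|u IHu]; first by rewrite big_ord1 h_itv0 e_itv0 !mulr1.
have := cauchy_ab u.+1; rewrite big_ord_recr /= subnn h_itv0 mulr1 => cauchy_u.
rewrite big_ord_recr /= subnn h_itv0 mulr1.
rewrite (eq_bigr (fun s : 'I_u.+1 =>
    (-1) ^+ s * e_itv a.+1 b s * h_itv a b (u - s) * X a
    + (-1) ^+ s * e_itv a.+1 b s * h_itv a.+1 b (u.+1 - s))) => [|s _]; last first.
  by rewrite (subSn (ltnSE (ltn_ord s))) h_itvSl // mulrDr !mulrA.
by rewrite big_split /= -mulr_suml IHu -addrA cauchy_u addr0 exprSr.
Qed.

Lemma e_h_cauchy_extend u :
  \sum_(s < u.+1) (-1) ^+ s * e_itv a b s * h_itv a b (u - s) = (u == 0)%:R.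
Proof.
case: u => [|u]; first by rewrite big_ord1 h_itv0 e_itv0 !mulr1.
have := e_h_cauchy_shift u.+1; rewrite big_ord_recl.
under eq_bigr do rewrite lift0 subSS; rewrite /= e_itv0 => shift_u.
rewrite big_ord_recl (eq_bigr (fun s : 'I_u.+1 =>
    (-1) ^+ s.+1 * e_itv a.+1 b s.+1 * h_itv a b (u - s)
    - X a * ((-1) ^+ s * e_itv a.+1 b s * h_itv a b (u - s)))) => [|s _]; last first.
  rewrite lift0 subSS e_itvSl // mulrDr mulrDl addrC exprS mulN1r !mulNr !mulrA.
  by rewrite (commr_sign (X a)).
rewrite big_split /= addrA e_itv0 shift_u sumrN -mulr_sumr e_h_cauchy_shift.
by rewrite exprS subrr.
Qed.

End ExtendLeft.

Lemma e_h_cauchy a b u : (a <= b)%N ->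
  \sum_(s < u.+1) (-1) ^+ s * e_itv a b s * h_itv a b (u - s) = (u == 0)%:R.
Proof.
move=> /subnKC <-; move: (b - a)%N => k; elim: k a u => [|k IHk] a u.
  by rewrite addn0 e_h_cauchy_id.
by rewrite -addSnnS e_h_cauchy_extend ?ltn_addr.
Qed.

Lemma e_itv_root_last n :
  \sum_(s < n.+2) (-1) ^+ s * e_itv 0 n.+1 s * X n ^+ (n.+1 - s) = 0.
Proof.
pose G s := (-1) ^+ s * e_itv 0 n s * X n ^+ (n.+1 - s).
rewrite big_ord_recl (eq_bigr (fun s : 'I_n.+1 => G s.+1 - G s)) => [|s _]; last first.
  rewrite lift0 e_itvSr // /G subSS (subSn (ltnSE (ltn_ord s))) !exprS mulN1r !mulNr.
  by rewrite mulrDr mulrDl opprD !mulrA.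
rewrite telescope_sum_ord /G (@e_itv_small 0 n n.+1) ?subn0 //.
by rewrite !e_itv0 !expr0 !mul1r mulr0 mul0r sub0r addrN.
Qed.

Lemma e_itv_root_first n :
  \sum_(s < n.+2) (-1) ^+ s * X 0 ^+ (n.+1 - s) * e_itv 0 n.+1 s = 0.
Proof.
pose G s := (-1) ^+ s * X 0 ^+ (n.+1 - s) * e_itv 1 n.+1 s.
rewrite big_ord_recl (eq_bigr (fun s : 'I_n.+1 => G s.+1 - G s)) => [|s _]; last first.
  rewrite lift0 e_itvSl // /G subSS (subSn (ltnSE (ltn_ord s))) [X 0 ^+ _.+1]exprSr.
  by rewrite exprS mulN1r !mulNr mulrDr addrC opprD !mulrA.
rewrite telescope_sum_ord /G (@e_itv_small 1 n.+1 n.+1) ?subn1 //.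
by rewrite !e_itv0 !expr0 !mulr1 mulr0 sub0r addrN.
Qed.

End IntervalSymmetricFunctions.

Section PowerReduction.
Variables (R : pzRingType) (y : R) (n : nat) (c : nat -> nat -> R).
Hypothesis c_base : y ^+ n.+1 = - \sum_(q < n.+1) c 0%N q * y ^+ q.
Hypothesis c_step0 : forall m, c m.+1 0%N = - (c m n * c 0%N 0%N).
Hypothesis c_stepS : forall m q, (q < n)%N -> c m.+1 q.+1 = c m q - c m n * c 0%N q.+1.

Lemma expr_reduce m : y ^+ (m + n.+1) = - \sum_(q < n.+1) c m q * y ^+ q.
Proof.
elim: m => [|m IHm]; first by rewrite add0n.
rewrite addSn exprSr IHm mulNr mulr_suml big_ord_recr /= -mulrA -exprSr c_base mulrN.
under eq_bigr do rewrite -mulrA -exprSr.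
rewrite [in RHS]big_ord_recl c_step0 [in RHS](eq_bigr (fun q : 'I_n => c m q * y ^+ q.+1
    - c m n * (c 0%N q.+1 * y ^+ q.+1))) => [|q _]; last first.
  by rewrite lift0 c_stepS // mulrBl mulrA.
rewrite sumrB -mulr_sumr big_ord_recl; congr (- _).
by rewrite mulrDr opprD addrCA mulNr -mulrA.
Qed.

End PowerReduction.

Section RemainderCoefficients.
Variables (R : pzRingType) (n : nat) (e h : nat -> R).
Hypothesis e0 : e 0%N = 1.
Hypothesis e_vanish : forall s, (n.+1 < s)%N -> e s = 0.
Hypothesis cauchy : forall u,
  \sum_(s < u.+1) (-1) ^+ s * h (u - s) * e s = (u == 0)%:R.

Definition rem_coef m q :=
  \sum_(r < m.+1) (-1) ^+ (m + n + 1 - q - r) * h r * e (m + n + 1 - q - r).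

Lemma h0_of_cauchy : h 0%N = 1.
Proof. by have := cauchy 0; rewrite big_ord1 e0 mulr1 mul1r. Qed.

Lemma rem_coef0 q : rem_coef 0 q = (-1) ^+ (n.+1 - q) * e (n.+1 - q).
Proof. by rewrite /rem_coef big_ord1 h0_of_cauchy mulr1 add0n addn1 !subn0. Qed.

Lemma rem_coefS m q : (q <= n.+1)%N ->
  rem_coef m.+1 q = \sum_(r < m.+1) (-1) ^+ (m.+1 + n + 1 - q - r) * h r
      * e (m.+1 + n + 1 - q - r) + h m.+1 * rem_coef 0 q.
Proof.
move=> le_q; rewrite rem_coef0 {1}/rem_coef big_ord_recr /=.
have -> : (m.+1 + n + 1 - q - m.+1 = n.+1 - q)%N by lia.
by rewrite -commr_sign mulrA.
Qed.

Lemma rem_coef_top m : rem_coef m n = - h m.+1.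
Proof.
have := cauchy m.+1; rewrite (reindex_inj rev_ord_inj) big_ord_recr /=.
rewrite subnn subn0 e0 mulr1 expr0 mul1r => /eqP; rewrite addr_eq0 => /eqP <-.
apply: eq_bigr => r _; rewrite subSS (subKn (ltnW (ltn_ord r))).
by have -> : (m + n + 1 - n - r = m.+1 - r)%N by lia.
Qed.

Lemma rem_coef_step0 m : rem_coef m.+1 0 = - (rem_coef m n * rem_coef 0 0).
Proof.
rewrite rem_coefS // rem_coef_top mulNr opprK big1 ?add0r // => r _.
by rewrite e_vanish ?mulr0 //; have := ltn_ord r; lia.
Qed.

Lemma rem_coef_stepS m q : (q < n)%N ->
  rem_coef m.+1 q.+1 = rem_coef m q - rem_coef m n * rem_coef 0 q.+1.
Proof.
by move=> lt_q; rewrite rem_coefS 1?ltnW // rem_coef_top mulNr opprK.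
Qed.

Lemma expr_rem_coef (y : R) :
  \sum_(s < n.+2) (-1) ^+ s * e s * y ^+ (n.+1 - s) = 0 ->
  forall m, y ^+ (m + n + 1) = - \sum_(q < n.+1) rem_coef m q * y ^+ q.
Proof.
move=> root m; rewrite addn1 -addnS.
apply: expr_reduce => [|{}m|{}m q]; [|exact: rem_coef_step0|exact: rem_coef_stepS].
move: root; rewrite (reindex_inj rev_ord_inj) big_ord_recr /= subnn e0 expr0 !mul1r.
rewrite subn0 addrC => /eqP; rewrite addr_eq0 => /eqP ->; congr (- _).
by apply: eq_bigr => q _; rewrite rem_coef0 subSS (subKn (ltnW (ltn_ord q))).
Qed.

End RemainderCoefficients.

Lemma sum_tupleS (T : finType) (V : nmodType) m
    (P : pred (m.+1.-tuple T)) (F : m.+1.-tuple T -> V) :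
  \sum_(t : m.+1.-tuple T | P t) F t =
  \sum_(i : T) \sum_(t : m.-tuple T | P [tuple of i :: t]) F [tuple of i :: t].
Proof.
rewrite pair_big_dep (reindex (fun p : T * m.-tuple T => [tuple of p.1 :: p.2])) //=.
exists (fun t : m.+1.-tuple T => (thead t, [tuple of behead t])) => [[i t]|t] _ /=.
  by congr pair; apply: val_inj.
by rewrite -tuple_eta.
Qed.

Section OrdinalVariables.
Variables (R : pzRingType) (n : nat) (x : 'I_n.+1 -> R).
Local Notation X := (fun i => x (inord i)).

Lemma tuple_sum_e_itv a r :
  \sum_(t : r.-tuple 'I_n.+1 | sorted (fun i j : 'I_n.+1 => (i < j)%N) t
                               && all (fun i : 'I_n.+1 => (a <= i)%N) t)
     \prod_(i <- t) x i = e_itv X a n.+1 r.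
Proof.
elim: r a => [|r IHr] a.
  by rewrite (big_pred1 [tuple]) ?big_nil // => t; rewrite tuple0.
rewrite sum_tupleS e_itvS big_geq_mkord [RHS]big_mkcond; apply: eq_bigr => i _ /=.
case: (leqP a i) => [le_ai | lt_ia]; last first.
  by rewrite big_pred0 // => t; rewrite /= andbF.
rewrite -(IHr i.+1) mulr_sumr inord_val; apply: eq_big => [t|t _]; last by rewrite big_cons.
rewrite /= (path_sortedE (fun j i k : 'I_n.+1 => @ltn_trans j i k)).
rewrite [_ && sorted _ _]andbC -andbA -all_predI; congr andb.
by apply: eq_all => j /=; lia.
Qed.

Lemma tuple_sum_h_itv b r : (b <= n.+1)%N ->
  \sum_(t : r.-tuple 'I_n.+1 | sorted (fun i j : 'I_n.+1 => (j <= i)%N) t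
                               && all (fun i : 'I_n.+1 => (i < b)%N) t)
     \prod_(i <- t) x i = h_itv X 0 b r.
Proof.
elim: r b => [|r IHr] b le_b.
  by rewrite (big_pred1 [tuple]) ?big_nil // => t; rewrite tuple0.
rewrite sum_tupleS h_itvS (big_nat_widen _ _ _ _ _ le_b) big_mkord [RHS]big_mkcond.
apply: eq_bigr => i _ /=.
case: (ltnP i b) => [lt_ib | le_bi]; last first.
  by rewrite big_pred0 // => t; rewrite /= andbF.
rewrite -(IHr i.+1) // mulr_sumr inord_val; apply: eq_big => [t|t _]; last by rewrite big_cons.
have ge_trans : transitive (fun i j : 'I_n.+1 => (j <= i)%N).
  by move=> j k l le_jk le_lj; apply: leq_trans le_lj le_jk.
rewrite /= (path_sortedE ge_trans).
rewrite [_ && sorted _ _]andbC -andbA -all_predI; congr andb.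
by apply: eq_all => j /=; lia.
Qed.

Lemma e_OP_itv r : e_OP x r = e_itv X 0 n.+1 r.
Proof.
rewrite -tuple_sum_e_itv; apply: eq_bigl => t.
by rewrite (@eq_all _ _ predT) ?all_predT ?andbT.
Qed.

Lemma h_OP_itv r : h_OP x r = h_itv X 0 n.+1 r.
Proof.
rewrite -tuple_sum_h_itv //; apply: eq_bigl => t.
by rewrite (@eq_all _ _ predT) ?all_predT ?andbT // => i; rewrite /= ltn_ord.
Qed.

End OrdinalVariables.

Lemma revrM (R : pzRingType) (a b : R) : (a : R^c) * (b : R^c) = b * a.
Proof. by []. Qed.

Section Reduction.
Variables (R : pzRingType) (n : nat) (x : 'I_n.+1 -> R).
Local Notation X := (fun i => x (inord i)).
Local Notation E := (e_itv X 0 n.+1).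
Local Notation H := (h_itv X 0 n.+1).

Lemma OPol_reduce_last m :
  x ord_max ^+ (m + n + 1) =
    - \sum_(q < n.+1)
        (\sum_(r < m.+1)
           (-1) ^+ (m + n + 1 - q - r) * h_OP x r * e_OP x (m + n + 1 - q - r))
        * x ord_max ^+ q.
Proof.
have -> : x ord_max = X n by congr x; apply: val_inj; rewrite /= inordK.
rewrite (@expr_rem_coef _ _ E H) => [||s lt_s|u|]; last exact: e_itv_root_last.
- congr (- _); apply: eq_bigr => q _; congr (_ * _).
  by apply: eq_bigr => r _; rewrite e_OP_itv h_OP_itv.
- by [].
- by rewrite e_itv_small ?subn0.
- exact: h_e_cauchy.
Qed.

Lemma OPol_reduce_first m :
  x ord0 ^+ (m + n + 1) =
    - \sum_(p < n.+1)
        x ord0 ^+ p *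
        (\sum_(s < m.+1)
           (-1) ^+ (m + n + 1 - p - s) * e_OP x (m + n + 1 - p - s) * h_OP x s).
Proof.
have -> : x ord0 = X 0 by congr x; apply: val_inj; rewrite /= inordK.
rewrite -[LHS]revrX (@expr_rem_coef R^c n E H) => [||s lt_s|u|].
- congr (- _); apply: eq_bigr => p _; rewrite revrM revrX; congr (_ * _).
  apply: eq_bigr => s _.
  by rewrite !revrM revrX e_OP_itv h_OP_itv mulrA commr_sign mulrA.
- by [].
- by rewrite e_itv_small ?subn0.
- rewrite -(e_h_cauchy X u (leq0n n.+1)); apply: eq_bigr => s _.
  by rewrite !revrM revrX mulrA commr_sign mulrA.
- rewrite -[RHS](e_itv_root_first X n); apply: eq_bigr => s _.
  by rewrite !revrM !revrX mulrA commr_sign mulrA.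
Qed.

End Reduction.

Theorem mainTheorem10 (k : fieldType) (Hk : (2 \notin [pchar k])%N)
  (A : algType k) (n : nat) (x : 'I_n.+1 -> A) (Hx : odd_anticomm x) (m : nat) :
  x ord_max ^+ (m + n + 1) =
    - \sum_(q < n.+1)
        (\sum_(r < m.+1)
           (-1) ^+ (m + n + 1 - q - r) * h_OP x r * e_OP x (m + n + 1 - q - r))
        * x ord_max ^+ q
  /\
  x ord0 ^+ (m + n + 1) =
    - \sum_(p < n.+1)
        x ord0 ^+ p *
        (\sum_(s < m.+1)
           (-1) ^+ (m + n + 1 - p - s) * e_OP x (m + n + 1 - p - s) * h_OP x s).
Proof. by split; [exact: OPol_reduce_last | exact: OPol_reduce_first]. Qed.
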